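(* Let $T\in(\mathbb{C}^n)^{\otimes3}$ be an $r$-diagonalisable symmetric tensor, $T=\sum_{i=1}^ru_i^{\otimes3}$ with the $u_i$ linearly independent, with $\kappa(T)\le B$, and let $T'\in(\mathbb{C}^n)^{\otimes3}$ satisfy $\|T-T'\|_F\le\delta$. Let $P\in\mathbb{C}^{n\times r}$ be a semi-unitary matrix whose column span is $\mathrm{span}\{u_1,\dots,u_r\}$, and let $P'\in\mathbb{C}^{n\times r}$ satisfy $\|P-P'\|\le\varepsilon_1<1$. Let $S=(\overline P\otimes\overline P\otimes\overline P).T$ and $S'=(\overline{P'}\otimes\overline{P'}\otimes\overline{P'}).T'$. Then $$\|S-S'\|_F\le 7\varepsilon_1r^{7/2}B^{3/2}+8\delta r^{3/2}.$$
   Context: $\kappa(T)=\|U\|_F^2+\|U^\dagger\|_F^2$ where $U$ has rows $u_1,\dots,u_r$ and $U^\dagger$ is the Moore–Penrose pseudoinverse (independent of the decomposition). Semi-unitary means $P^*P=I_r$; $\overline P$ is the entrywise conjugate. $\|P-P'\|$ is the operator norm; $\|\cdot\|_F$ on tensors is the Frobenius norm. For $M\in\mathbb{C}^{n\times r}$, $\big((M\otimes M\otimes M).T\big)_{i_1i_2i_3}=\sum_{j_1,j_2,j_3=1}^nM_{j_1i_1}M_{j_2i_2}M_{j_3i_3}T_{j_1j_2j_3}$. *)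

From HB Require Import structures.
From mathcomp Require Import all_boot all_order all_algebra.
From mathcomp Require Import complex.
From mathcomp Require Import boolp classical_sets reals.
Set Implicit Arguments. Unset Strict Implicit. Unset Printing Implicit Defensive.
Import Order.TTheory GRing.Theory Num.Theory.
Local Open Scope ring_scope.
Local Open Scope classical_set_scope.

Definition sqmod (R : realType) (z : R[i]) : R := complex.Re z ^+ 2 + complex.Im z ^+ 2.

Definition cconjmx (R : realType) m n (A : 'M[R[i]]_(m, n)) : 'M[R[i]]_(m, n) :=
  map_mx (@conjc R) A.

Definition adjmx (R : realType) m n (A : 'M[R[i]]_(m, n)) : 'M[R[i]]_(n, m) :=
  (cconjmx A)^T.

Definition frobmx (R : realType) m n (A : 'M[R[i]]_(m, n)) : R :=
  Num.sqrt (\sum_(i < m) \sum_(j < n) sqmod (A i j)).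

Definition vnorm (R : realType) m (x : 'cV[R[i]]_m) : R := frobmx x.

Definition opnorm (R : realType) m n (A : 'M[R[i]]_(m, n)) : R :=
  sup [set vnorm (A *m x) | x in [set x : 'cV[R[i]]_n | vnorm x = 1]].

Definition tensor3 (R : realType) (n : nat) := 'I_n -> 'I_n -> 'I_n -> R[i].

Definition tfrob (R : realType) n (T : tensor3 R n) : R :=
  Num.sqrt (\sum_(i < n) \sum_(j < n) \sum_(k < n) sqmod (T i j k)).

Definition tsub (R : realType) n (T T' : tensor3 R n) : tensor3 R n :=
  fun i j k => T i j k - T' i j k.

(* sum_{i<r} u_i^{⊗3}, where u_i is the i-th row of U *)
Definition cubes_sum (R : realType) r n (U : 'M[R[i]]_(r, n)) : tensor3 R n :=
  fun j1 j2 j3 => \sum_(i < r) U i j1 * U i j2 * U i j3.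

Definition mlmul (R : realType) n r (M : 'M[R[i]]_(n, r)) (T : tensor3 R n)
  : tensor3 R r :=
  fun i1 i2 i3 => \sum_(j1 < n) \sum_(j2 < n) \sum_(j3 < n)
     M j1 i1 * M j2 i2 * M j3 i3 * T j1 j2 j3.

Definition is_pinv (R : realType) m n (U : 'M[R[i]]_(m, n)) (X : 'M[R[i]]_(n, m))
  : Prop :=
  [/\ U *m X *m U = U, X *m U *m X = X,
      adjmx (U *m X) = U *m X & adjmx (X *m U) = X *m U].

Definition kappa_of (R : realType) r n (U : 'M[R[i]]_(r, n)) (Ud : 'M[R[i]]_(n, r))
  : R := frobmx U ^+ 2 + frobmx Ud ^+ 2.

Definition semi_unitary (R : realType) n r (P : 'M[R[i]]_(n, r)) : Prop :=
  adjmx P *m P = 1%:M.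

From mathcomp Require Import all_boot all_order all_algebra.
From mathcomp Require Import complex.
From mathcomp Require Import reals.
From mathcomp Require Import ring lra.
Import Order.TTheory GRing.Theory Num.Theory.
Import ComplexField.Normc.
Local Open Scope ring_scope.

(* With Δ = P̄ - P̄', telescoping gives
     S - S' = (P̄⊗P̄⊗P̄).(T - T') + (Δ⊗P̄⊗P̄).T' + (P̄'⊗Δ⊗P̄).T' + (P̄'⊗P̄'⊗Δ).T',
   and entrywise Cauchy-Schwarz gives ||(A⊗B⊗C).X||_F <= ||A||_F ||B||_F ||C||_F ||X||_F.
   Here ||P̄||_F = √r, ||Δ||_F <= √r ε₁ (bound each column by the operator norm),
   ||P̄'||_F <= 2√r, and T = (U⊗U⊗U).I_r for the diagonal tensor I_r gives
   ||T||_F <= ||U||_F³ √r <= B^(3/2) √r. *)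

Set Implicit Arguments. Unset Strict Implicit. Unset Printing Implicit Defensive.

Section ComplexModulus.
Variable R : realType.
Implicit Types a b z : R[i].

Lemma sqmodE z : sqmod z = normc z ^+ 2.
Proof. by case: z => x y; rewrite /sqmod /= sqr_sqrtr // addr_ge0 // sqr_ge0. Qed.

Lemma sqmod_ge0 z : 0 <= sqmod z.
Proof. by rewrite sqmodE sqr_ge0. Qed.

Lemma sqmodM a b : sqmod (a * b) = sqmod a * sqmod b.
Proof. by rewrite !sqmodE normcM exprMn. Qed.

Lemma sqmodN z : sqmod (- z) = sqmod z.
Proof. by rewrite !sqmodE normcN. Qed.

Lemma sqmodJ z : sqmod z^*%C = sqmod z.
Proof. by case: z => x y; rewrite /sqmod /= sqrrN. Qed.

Lemma mulJc_sqmod z : (z^* * z)%C = (sqmod z)%:C%C.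
Proof.
by case: z => x y; apply/eqP; rewrite eq_complex /sqmod /=; apply/andP; split; apply/eqP; ring.
Qed.

Lemma sqmod0 : sqmod (0 : R[i]) = 0.
Proof. by rewrite /sqmod /= expr0n addr0. Qed.

Lemma sqmod1 : sqmod (1 : R[i]) = 1.
Proof. by rewrite /sqmod /= expr1n expr0n addr0. Qed.

Lemma normc_ge0 z : 0 <= normc z.
Proof. by case: z => x y; rewrite sqrtr_ge0. Qed.

Lemma ler_normc_sum (I : finType) (f : I -> R[i]) :
  normc (\sum_i f i) <= \sum_i normc (f i).
Proof.
elim/big_ind2: _ => [|x1 x2 y1 y2 le1 le2|//]; first by rewrite normc0.
exact: le_trans (le_normcD _ _) (lerD le1 le2).
Qed.

End ComplexModulus.

Lemma sqrtr_le (R : rcfType) (a b : R) : 0 <= b -> a <= b ^+ 2 -> Num.sqrt a <= b.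
Proof.
by move=> b0 ab; rewrite -(ger0_norm b0) -sqrtr_sqr ler_sqrt ?sqr_ge0.
Qed.

Section FiniteSums.
Variables (R : realType) (I : finType).

Lemma CauchySchwarz_sumr (a b : I -> R) :
  (\sum_i a i * b i) ^+ 2 <= (\sum_i a i ^+ 2) * (\sum_i b i ^+ 2).
Proof.
have lagrange : \sum_k \sum_l (a k * b l - a l * b k) ^+ 2 =
    2%:R * ((\sum_i a i ^+ 2) * (\sum_i b i ^+ 2) - (\sum_i a i * b i) ^+ 2).
  transitivity (\sum_k \sum_l a k ^+ 2 * b l ^+ 2 + \sum_k \sum_l a l ^+ 2 * b k ^+ 2
                - 2%:R * \sum_k \sum_l (a k * b k) * (a l * b l)).
    rewrite mulr_sumr -big_split /= -sumrB; apply: eq_bigr => k _.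
    by rewrite mulr_sumr -big_split /= -sumrB; apply: eq_bigr => l _; ring.
  rewrite [X in _ + X - _]exchange_big expr2 !big_distrlr /=; ring.
have : 0 <= \sum_k \sum_l (a k * b l - a l * b k) ^+ 2.
  by do 2 (apply: sumr_ge0 => ? _); exact: sqr_ge0.
by rewrite lagrange pmulr_rge0 ?ltr0n // subr_ge0.
Qed.

Lemma CauchySchwarz_sqmod (f g : I -> R[i]) :
  sqmod (\sum_i f i * g i) <= (\sum_i sqmod (f i)) * (\sum_i sqmod (g i)).
Proof.
have norm_le : normc (\sum_i f i * g i) <= \sum_i normc (f i) * normc (g i).
  by under [X in _ <= X]eq_bigr do rewrite -normcM; exact: ler_normc_sum.
rewrite sqmodE; under [X in _ <= X * _]eq_bigr do rewrite sqmodE.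
under [X in _ <= _ * X]eq_bigr do rewrite sqmodE.
apply: le_trans (CauchySchwarz_sumr _ _).
have sum_ge0 : 0 <= \sum_i normc (f i) * normc (g i) := le_trans (normc_ge0 _) norm_le.
by rewrite ler_sqr ?nnegrE ?normc_ge0.
Qed.

Lemma Minkowski_sqmod (f g : I -> R[i]) :
  Num.sqrt (\sum_i sqmod (f i + g i)) <=
  Num.sqrt (\sum_i sqmod (f i)) + Num.sqrt (\sum_i sqmod (g i)).
Proof.
set A := \sum_i sqmod (f i); set B := \sum_i sqmod (g i).
have A0 : 0 <= A by apply: sumr_ge0 => i _; exact: sqmod_ge0.
have B0 : 0 <= B by apply: sumr_ge0 => i _; exact: sqmod_ge0.
have cross : \sum_i normc (f i) * normc (g i) <= Num.sqrt A * Num.sqrt B.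
  rewrite -sqrtrM // -ler_sqr ?nnegrE ?sqr_sqrtr ?mulr_ge0 ?sqrtr_ge0 //; last first.
    by apply: sumr_ge0 => i _; rewrite mulr_ge0 ?normc_ge0.
  rewrite /A /B; under [X in _ <= X * _]eq_bigr do rewrite sqmodE.
  under [X in _ <= _ * X]eq_bigr do rewrite sqmodE.
  exact: CauchySchwarz_sumr.
apply: sqrtr_le; first by rewrite addr_ge0 ?sqrtr_ge0.
apply: le_trans (_ : \sum_i (normc (f i) + normc (g i)) ^+ 2 <= _).
  apply: ler_sum => i _; rewrite sqmodE ler_sqr ?nnegrE ?addr_ge0 ?normc_ge0 //.
  exact: le_normcD.
have expand : \sum_i (normc (f i) + normc (g i)) ^+ 2 =
    A + B + 2%:R * \sum_i normc (f i) * normc (g i).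
  rewrite /A /B mulr_sumr -!big_split /=; apply: eq_bigr => i _.
  by rewrite !sqmodE; ring.
by rewrite expand sqrrD !sqr_sqrtr //; lra.
Qed.

End FiniteSums.

Lemma triple_bigA (V : nmodType) (I J K : finType) (F : I -> J -> K -> V) :
  \sum_i \sum_j \sum_k F i j k = \sum_(p : I * J * K) F p.1.1 p.1.2 p.2.
Proof. by rewrite pair_bigA pair_bigA. Qed.

Lemma big_distr3 (S : pzSemiRingType) (I J K : finType)
    (f : I -> S) (g : J -> S) (h : K -> S) :
  \sum_i \sum_j \sum_k f i * g j * h k = (\sum_i f i) * (\sum_j g j) * (\sum_k h k).
Proof.
rewrite big_distrlr big_distrl /=; apply: eq_bigr => i _.
by rewrite big_distrl /=; apply: eq_bigr => j _; rewrite big_distrr.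
Qed.

Section FrobeniusNorms.
Variable R : realType.

Definition sqfrobmx m n (A : 'M[R[i]]_(m, n)) : R := \sum_i \sum_j sqmod (A i j).
Definition sqtfrob n (T : tensor3 R n) : R := \sum_i \sum_j \sum_k sqmod (T i j k).

Lemma sqfrobmx_ge0 m n (A : 'M[R[i]]_(m, n)) : 0 <= sqfrobmx A.
Proof. by do 2 (apply: sumr_ge0 => ? _); exact: sqmod_ge0. Qed.

Lemma sqfrobmx_tr m n (A : 'M[R[i]]_(m, n)) : sqfrobmx A = \sum_j \sum_i sqmod (A i j).
Proof. exact: exchange_big. Qed.

Lemma frobmx_ge0 m n (A : 'M[R[i]]_(m, n)) : 0 <= frobmx A.
Proof. exact: sqrtr_ge0. Qed.

Lemma tfrob_ge0 n (T : tensor3 R n) : 0 <= tfrob T.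
Proof. exact: sqrtr_ge0. Qed.

Lemma frobmxJ m n (A : 'M[R[i]]_(m, n)) : frobmx (cconjmx A) = frobmx A.
Proof.
by rewrite /frobmx; congr Num.sqrt; do 2 (apply: eq_bigr => ? _); rewrite mxE sqmodJ.
Qed.

Lemma cconjmxB m n (A B : 'M[R[i]]_(m, n)) : cconjmx (A - B) = cconjmx A - cconjmx B.
Proof. exact: map_mxB. Qed.

Lemma ler_frobmxB m n (A B : 'M[R[i]]_(m, n)) : frobmx (A - B) <= frobmx A + frobmx B.
Proof.
rewrite /frobmx !pair_bigA /=.
under [X in _ <= _ + Num.sqrt X]eq_bigr do rewrite -sqmodN.
under eq_bigr do rewrite !mxE.
exact: Minkowski_sqmod.
Qed.

Definition tadd n (X Y : tensor3 R n) : tensor3 R n := fun i j k => X i j k + Y i j k.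

Lemma eq_tfrob n (X Y : tensor3 R n) :
  (forall i j k, X i j k = Y i j k) -> tfrob X = tfrob Y.
Proof.
by move=> eqXY; rewrite /tfrob; congr Num.sqrt; do 3 (apply: eq_bigr => ? _); rewrite eqXY.
Qed.

Lemma ler_tfrobD n (X Y : tensor3 R n) : tfrob (tadd X Y) <= tfrob X + tfrob Y.
Proof.
rewrite /tfrob !triple_bigA.
exact: (Minkowski_sqmod (fun p : 'I_n * 'I_n * 'I_n => X p.1.1 p.1.2 p.2)
                        (fun p => Y p.1.1 p.1.2 p.2)).
Qed.

Lemma ler_tfrobB n (X Y : tensor3 R n) : tfrob (tsub X Y) <= tfrob X + tfrob Y.
Proof.
have -> : tfrob Y = tfrob (fun i j k => - Y i j k).
  by rewrite /tfrob; congr Num.sqrt; do 3 (apply: eq_bigr => ? _); rewrite sqmodN.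
exact: ler_tfrobD.
Qed.

Lemma ler_tfrob_tsub n (X Y : tensor3 R n) : tfrob Y <= tfrob X + tfrob (tsub X Y).
Proof.
rewrite -[leLHS](eq_tfrob (_ : forall i j k, tsub X (tsub X Y) i j k = Y i j k)).
  exact: ler_tfrobB.
by move=> i j k; rewrite /tsub subKr.
Qed.

Lemma frobmx_le_kappa r n (U : 'M[R[i]]_(r, n)) (Ud : 'M[R[i]]_(n, r)) :
  frobmx U <= Num.sqrt (kappa_of U Ud).
Proof.
rewrite -[leLHS]ger0_norm ?frobmx_ge0 // -sqrtr_sqr ler_wsqrtr //.
by rewrite lerDl sqr_ge0.
Qed.

End FrobeniusNorms.

Section OperatorNorm.
Variable R : realType.

Lemma vnorm_ge0 m (x : 'cV[R[i]]_m) : 0 <= vnorm x.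
Proof. exact: sqrtr_ge0. Qed.

Lemma sqr_vnorm m (x : 'cV[R[i]]_m) : vnorm x ^+ 2 = \sum_i sqmod (x i 0).
Proof. by rewrite sqr_sqrtr ?sqfrobmx_ge0 //; apply: eq_bigr => i _; rewrite big_ord1. Qed.

Lemma ler_vnorm_mul m n (A : 'M[R[i]]_(m, n)) (x : 'cV[R[i]]_n) :
  vnorm (A *m x) <= frobmx A * vnorm x.
Proof.
apply: sqrtr_le; first by rewrite mulr_ge0 ?frobmx_ge0 ?vnorm_ge0.
rewrite exprMn sqr_vnorm sqr_sqrtr ?sqfrobmx_ge0 // mulr_suml.
by apply: ler_sum => i _; rewrite big_ord1 mxE; exact: CauchySchwarz_sqmod.
Qed.

Lemma opnorm_ub m n (A : 'M[R[i]]_(m, n)) (x : 'cV[R[i]]_n) :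
  vnorm x = 1 -> vnorm (A *m x) <= opnorm A.
Proof.
move=> x1; apply: ub_le_sup; last by exists x.
exists (frobmx A) => _ [y y1 <-].
by rewrite -[leRHS]mulr1 -y1 ler_vnorm_mul.
Qed.

Lemma vnorm_delta n (j : 'I_n) : vnorm (delta_mx j 0 : 'cV[R[i]]_n) = 1.
Proof.
rewrite -[RHS]sqrtr1; congr Num.sqrt.
rewrite (bigD1 j) //= big_ord1 !mxE !eqxx sqmod1 big1 ?addr0 // => i /negbTE ij.
by rewrite big_ord1 mxE ij sqmod0.
Qed.

Lemma opnorm_ge0 m n (A : 'M[R[i]]_(m, n)) : (0 < n)%N -> 0 <= opnorm A.
Proof.
move=> n_gt0; apply: le_trans (opnorm_ub A (vnorm_delta (Ordinal n_gt0))).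
exact: vnorm_ge0.
Qed.

Lemma sqfrobmx_col m n (A : 'M[R[i]]_(m, n)) : sqfrobmx A = \sum_j vnorm (col j A) ^+ 2.
Proof.
rewrite sqfrobmx_tr; apply: eq_bigr => j _.
by rewrite sqr_vnorm; apply: eq_bigr => i _; rewrite mxE.
Qed.

Lemma frobmx_le_opnorm m n (A : 'M[R[i]]_(m, n)) : frobmx A <= Num.sqrt n%:R * opnorm A.
Proof.
case: n A => [|n] A.
  by rewrite /frobmx sqrtr0 mul0r big1 ?sqrtr0 // => i _; rewrite big_ord0.
rewrite -[opnorm A]ger0_norm ?opnorm_ge0 // -sqrtr_sqr -sqrtrM ?ler0n //.
apply: ler_wsqrtr; rewrite -/(sqfrobmx A) sqfrobmx_col.
rewrite mulr_natl -[X in _ *+ X](card_ord n.+1) -sumr_const.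
apply: ler_sum => j _; rewrite ler_sqr ?nnegrE ?vnorm_ge0 ?opnorm_ge0 // colE.
exact/opnorm_ub/vnorm_delta.
Qed.

Lemma frobmx_semi_unitary n r (P : 'M[R[i]]_(n, r)) :
  semi_unitary P -> frobmx P = Num.sqrt r%:R.
Proof.
move=> unitP; congr Num.sqrt; rewrite -/(sqfrobmx P) sqfrobmx_col.
rewrite -[X in X%:R](card_ord r) -sumr_const.
apply: eq_bigr => j _; rewrite sqr_vnorm; apply: (@complexI R).
rewrite [RHS](_ : _ = (adjmx P *m P) j j); last by rewrite unitP mxE eqxx.
by rewrite raddf_sum mxE; apply: eq_bigr => i _; rewrite !mxE mulJc_sqmod.
Qed.

End OperatorNorm.

Section Multilinear.
Variable R : realType.

Definition mlmul3 n r (A B C : 'M[R[i]]_(n, r)) (T : tensor3 R n) : tensor3 R r :=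
  fun i1 i2 i3 => \sum_(j1 < n) \sum_(j2 < n) \sum_(j3 < n)
     A j1 i1 * B j2 i2 * C j3 i3 * T j1 j2 j3.

Lemma sqtfrob_mlmul3 n r (A B C : 'M[R[i]]_(n, r)) (T : tensor3 R n) :
  sqtfrob (mlmul3 A B C T) <= sqfrobmx A * sqfrobmx B * sqfrobmx C * sqtfrob T.
Proof.
pose col2 (M : 'M[R[i]]_(n, r)) i := \sum_j sqmod (M j i).
have entry_le i1 i2 i3 :
    sqmod (mlmul3 A B C T i1 i2 i3) <= col2 A i1 * col2 B i2 * col2 C i3 * sqtfrob T.
  rewrite /mlmul3 /sqtfrob !triple_bigA.
  apply: le_trans (CauchySchwarz_sqmod _ _) _.
  rewrite -(triple_bigA (fun j1 j2 j3 => sqmod (A j1 i1 * B j2 i2 * C j3 i3))) /=.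
  by under eq_bigr do under eq_bigr do under eq_bigr do rewrite !sqmodM; rewrite big_distr3.
rewrite !sqfrobmx_tr -big_distr3 !mulr_suml [leLHS]/sqtfrob.
apply: ler_sum => i1 _; rewrite mulr_suml; apply: ler_sum => i2 _; rewrite mulr_suml.
by apply: ler_sum => i3 _; exact: entry_le.
Qed.

Lemma tfrob_mlmul3 n r (A B C : 'M[R[i]]_(n, r)) (T : tensor3 R n) :
  tfrob (mlmul3 A B C T) <= frobmx A * frobmx B * frobmx C * tfrob T.
Proof.
rewrite /tfrob /frobmx -!sqrtrM ?mulr_ge0 ?sqfrobmx_ge0 //.
exact: ler_wsqrtr (sqtfrob_mlmul3 _ _ _ _).
Qed.

Lemma mlmul_subE n r (A A' : 'M[R[i]]_(n, r)) (T T' : tensor3 R n) i1 i2 i3 :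
  tsub (mlmul A T) (mlmul A' T') i1 i2 i3 =
  tadd (tadd (mlmul A (tsub T T')) (mlmul3 (A - A') A A T'))
       (tadd (mlmul3 A' (A - A') A T') (mlmul3 A' A' (A - A') T')) i1 i2 i3.
Proof.
rewrite /tsub /tadd /mlmul /mlmul3 !triple_bigA -sumrB -!big_split /=.
by apply: eq_bigr => p _; rewrite !mxE; ring.
Qed.

Lemma tfrob_mlmul_sub n r (A A' : 'M[R[i]]_(n, r)) (T T' : tensor3 R n) :
  tfrob (tsub (mlmul A T) (mlmul A' T')) <=
  frobmx A ^+ 3 * tfrob (tsub T T')
  + frobmx (A - A') * (frobmx A ^+ 2 + frobmx A' * frobmx A + frobmx A' ^+ 2) * tfrob T'.
Proof.
rewrite (eq_tfrob (mlmul_subE A A' T T')).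
apply: le_trans (ler_tfrobD _ _) _.
have := ler_tfrobD (mlmul A (tsub T T')) (mlmul3 (A - A') A A T').
have := ler_tfrobD (mlmul3 A' (A - A') A T') (mlmul3 A' A' (A - A') T').
have := tfrob_mlmul3 A A A (tsub T T').
have := tfrob_mlmul3 (A - A') A A T'.
have := tfrob_mlmul3 A' (A - A') A T'.
have := tfrob_mlmul3 A' A' (A - A') T'.
rewrite /mlmul; lra.
Qed.

Definition idtensor r : tensor3 R r :=
  fun a b c => if (a == b) && (b == c) then 1 else 0.
Arguments idtensor : clear implicits.

Lemma cubes_sumE r n (U : 'M[R[i]]_(r, n)) j1 j2 j3 :
  cubes_sum U j1 j2 j3 = mlmul3 U U U (idtensor r) j1 j2 j3.
Proof.
rewrite /cubes_sum /mlmul3 /idtensor; apply: eq_bigr => a _.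
rewrite (bigD1 a) //= [X in _ + X]big1 => [|b /negbTE ab]; last first.
  by apply: big1 => c _; rewrite eq_sym ab mulr0.
rewrite eqxx addr0 (bigD1 a) //= [X in _ + X]big1 => [|c /negbTE ac].
  by rewrite eqxx mulr1 addr0.
by rewrite eq_sym ac mulr0.
Qed.

Lemma tfrob_idtensor r : tfrob (idtensor r) = Num.sqrt r%:R.
Proof.
rewrite /tfrob /idtensor; congr Num.sqrt.
transitivity (\sum_(a < r) (1 : R)); last by rewrite sumr_const card_ord.
apply: eq_bigr => a _; rewrite (bigD1 a) //= [X in _ + X]big1 => [|b /negbTE ab].
  rewrite eqxx addr0 (bigD1 a) //= [X in _ + X]big1 => [|c /negbTE ac].
    by rewrite eqxx sqmod1 addr0.
  by rewrite eq_sym ac sqmod0.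
by apply: big1 => c _; rewrite eq_sym ab sqmod0.
Qed.

Lemma tfrob_cubes_sum r n (U : 'M[R[i]]_(r, n)) :
  tfrob (cubes_sum U) <= frobmx U ^+ 3 * Num.sqrt r%:R.
Proof.
rewrite (eq_tfrob (cubes_sumE U)) -tfrob_idtensor.
by apply: le_trans (tfrob_mlmul3 _ _ _ _) _; rewrite -expr2 -exprSr.
Qed.

End Multilinear.

Lemma perturbation_bound_arith (R : realFieldType) (s b eps delta d q x t : R) :
  1 <= s -> 0 <= b -> 0 <= eps < 1 -> 0 <= d <= s * eps -> 0 <= q <= 2%:R * s ->
  0 <= x <= delta -> 0 <= t <= b ^+ 3 * s + delta ->
  s ^+ 3 * x + d * (s ^+ 2 + q * s + q ^+ 2) * t
    <= 7%:R * eps * (s ^+ 2 ^+ 3 * s) * (b ^+ 2 * b) + 8%:R * delta * (s ^+ 2 * s).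
Proof.
move=> s_ge1 b_ge0 /andP[eps_ge0 eps_lt1] /andP[d_ge0 d_le] /andP[q_ge0 q_le].
move=> /andP[x_ge0 x_le] /andP[t_ge0 t_le].
have s_ge0 : 0 <= s := le_trans ler01 s_ge1.
have quad_ge0 : 0 <= s ^+ 2 + q * s + q ^+ 2 by rewrite !addr_ge0 ?mulr_ge0 ?sqr_ge0.
have quad_le : s ^+ 2 + q * s + q ^+ 2 <= 7%:R * s ^+ 2 by nra.
have cross : d * (s ^+ 2 + q * s + q ^+ 2) * t <=
    (s * eps) * (7%:R * s ^+ 2) * (b ^+ 3 * s + delta).
  by apply: ler_pM; rewrite ?mulr_ge0 //; apply: ler_pM.
have s3_ge0 : 0 <= s ^+ 3 by rewrite exprn_ge0.
have delta_ge0 : 0 <= delta := le_trans x_ge0 x_le.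
have x_term : s ^+ 3 * x <= s ^+ 3 * delta by rewrite ler_wpM2l.
have delta_term : eps * (s ^+ 3 * delta) <= s ^+ 3 * delta.
  by rewrite ler_piMl ?mulr_ge0 // ltW.
have b_term : eps * b ^+ 3 * s ^+ 4 <= eps * b ^+ 3 * s ^+ 7.
  by rewrite ler_wpM2l ?mulr_ge0 ?exprn_ge0 // ler_weXn2l.
lra.
Qed.

Unset Implicit Arguments.
Theorem lemma5p7 (R : realType) (n r : nat)
    (U : 'M[R[i]]_(r, n)) (Ud : 'M[R[i]]_(n, r))
    (T T' : tensor3 R n) (P P' : 'M[R[i]]_(n, r)) (B delta eps1 : R) :
  row_free U ->
  T = cubes_sum U ->
  is_pinv U Ud ->
  kappa_of U Ud <= B ->
  tfrob (tsub T T') <= delta ->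
  semi_unitary P ->
  (P^T == U)%MS ->
  opnorm (P - P') <= eps1 -> eps1 < 1 ->
  tfrob (tsub (mlmul (cconjmx P) T) (mlmul (cconjmx P') T'))
    <= 7%:R * eps1 * (r%:R ^+ 3 * Num.sqrt r%:R) * (B * Num.sqrt B)
       + 8%:R * delta * (r%:R * Num.sqrt r%:R).
Proof.
move=> _ -> _ kappaB dT unitP _ opnormD eps1_lt1.
have [r0|r_gt0] := posnP r.
  rewrite /tfrob big1 => [|i _]; last by move: (ltn_ord i); rewrite [X in (_ < X)%N]r0.
  by rewrite sqrtr0 r0 sqrtr0 !(mulr0, mul0r, addr0).
have B_ge0 : 0 <= B by apply: le_trans kappaB; rewrite addr_ge0 ?sqr_ge0.
set s := Num.sqrt r%:R; set b := Num.sqrt B.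
have U_le : frobmx U <= b := le_trans (frobmx_le_kappa U Ud) (ler_wsqrtr kappaB).
have eps1_ge0 : 0 <= eps1 := le_trans (opnorm_ge0 _ r_gt0) opnormD.
have Pbar : frobmx (cconjmx P) = s by rewrite frobmxJ frobmx_semi_unitary.
have Dbar : frobmx (cconjmx P - cconjmx P') <= s * eps1.
  rewrite -cconjmxB frobmxJ; apply: le_trans (frobmx_le_opnorm _) _.
  by rewrite ler_wpM2l ?sqrtr_ge0.
have Pbar' : frobmx (cconjmx P') <= 2%:R * s.
  have := ler_frobmxB (cconjmx P) (cconjmx P - cconjmx P').
  rewrite subKr Pbar => /le_trans->//; rewrite mulr_natl mulr2n lerD2l.
  by apply: le_trans Dbar _; rewrite ler_piMr ?sqrtr_ge0 // ltW.
have T_le : tfrob (cubes_sum U) <= b ^+ 3 * s.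
  apply: le_trans (tfrob_cubes_sum U) _; rewrite ler_wpM2r ?sqrtr_ge0 //.
  by rewrite lerXn2r ?nnegrE ?frobmx_ge0 ?sqrtr_ge0.
have T'_le : tfrob T' <= b ^+ 3 * s + delta.
  exact: le_trans (ler_tfrob_tsub (cubes_sum U) T') (lerD T_le dT).
apply: le_trans (tfrob_mlmul_sub _ _ _ _) _.
rewrite Pbar -[r%:R](sqr_sqrtr (ler0n _ r)) -[B](sqr_sqrtr B_ge0) -/s -/b.
apply: perturbation_bound_arith; rewrite ?sqrtr_ge0 ?frobmx_ge0 ?tfrob_ge0 ?eps1_ge0 //=.
by rewrite -sqrtr1 ler_wsqrtr // ler1n.
Qed.
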